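(* Let $m,n,d,n_0$ be positive integers, $R>0$, $\mathbb{S}^d:=[-R,R]^d$, $x\in\mathbb{R}^{m\times n}$, and let $G:\mathbb{R}^d\to\mathbb{R}^{m\times n}$ be continuous. Assume there exists $z^*\in\mathbb{S}^d$ with $\|x-G(z^* )\|_0\le n_0$. Consider the constrained problem $$(\mathrm{P}_0):\quad \min_{z\in\mathbb{S}^d,\ M\in\mathbb{R}^{m\times n}} \|(\mathbf{1}-M)\odot x-(\mathbf{1}-M)\odot G(z)\|_2^2 \quad\text{s.t. } \|M\|_0\le n_0,$$ and, for $\lambda>0$, the penalized problem $$(\mathrm{P}_\lambda):\quad \min_{z\in\mathbb{S}^d,\ M\in\mathbb{R}^{m\times n}} \|(\mathbf{1}-M)\odot x-(\mathbf{1}-M)\odot G(z)\|_2^2+\lambda\|M\|_1 .$$ Let $\hat z(\lambda)$ be any optimal $z$-component of a solution of $(\mathrm{P}_\lambda)$, and let $\mathcal{Z}^*$ be the set of $z$-components of optimal solutions of $(\mathrm{P}_0)$. Then $d_\infty(\hat z(\lambda),\mathcal{Z}^* )\downarrow 0$ as $\lambda\downarrow 0$. Moreover, letting $\tilde n=\min_{z\in\mathbb{S}^d}\|x-G(z)\|_0$ and $\tilde{\mathcal{Z}}=\{z\in\mathbb{S}^d : \|x-G(z)\|_0=\tilde n\}$, we have $d_\infty(\hat z(\lambda),\tilde{\mathcal{Z}})\downarrow 0$ as $\lambda\downarrow 0$. If in addition $\tilde{\mathcal{Z}}=\{z^*\}$ (i.e. $z^*$ is the unique minimizer of $\|x-G(z)\|_0$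 over $\mathbb{S}^d$), then $\hat z(\lambda)\to z^*$ as $\lambda\downarrow 0$.
   Context: For a matrix $T$, $\|T\|_0$ is the number of nonzero entries, and $\|T\|_1,\|T\|_2,\|T\|_\infty$ are computed by treating $T$ as a vector. $\mathbf{1}$ is the all-ones $m\times n$ matrix and $\odot$ is the entrywise (Hadamard) product. For a point $a$ and a set $B$, $d_\infty(a,B):=\inf_{b\in B}\|a-b\|_\infty$. *)

From HB Require Import structures.
From mathcomp Require Import all_boot all_order all_algebra.
From mathcomp Require Import all_classical all_reals all_analysis.
Set Implicit Arguments. Unset Strict Implicit. Unset Printing Implicit Defensive.
Import Order.TTheory GRing.Theory Num.Theory.
Import numFieldNormedType.Exports.
Local Open Scope classical_set_scope.
Local Open Scope ring_scope.

Section Defs.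
Variable R : realType.

Definition l0norm (m n : nat) (T : 'M[R]_(m, n)) : nat :=
  #|[set ij : 'I_m * 'I_n | T ij.1 ij.2 != 0]|.

Definition l1norm (m n : nat) (T : 'M[R]_(m, n)) : R :=
  \sum_(i < m) \sum_(j < n) `|T i j|.

Definition l2norm_sq (m n : nat) (T : 'M[R]_(m, n)) : R :=
  \sum_(i < m) \sum_(j < n) (T i j) ^+ 2.

Definition linfnorm (d : nat) (v : 'rV[R]_d) : R :=
  \big[Num.max/0]_(i < d) `|v 0 i|.

Definition hadamard (m n : nat) (A B : 'M[R]_(m, n)) : 'M[R]_(m, n) :=
  \matrix_(i, j) (A i j * B i j).

Definition ones (m n : nat) : 'M[R]_(m, n) := const_mx 1.

Definition dinf (d : nat) (a : 'rV[R]_d) (B : set 'rV[R]_d) : R :=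
  inf [set linfnorm (a - b) | b in B].

Definition box (d : nat) (r : R) : set 'rV[R]_d :=
  [set z | forall i : 'I_d, - r <= z 0 i <= r].

Definition fid (m n d : nat) (x : 'M[R]_(m, n)) (G : 'rV[R]_d -> 'M[R]_(m, n))
    (z : 'rV[R]_d) (M : 'M[R]_(m, n)) : R :=
  l2norm_sq (hadamard (ones m n - M) x - hadamard (ones m n - M) (G z)).

Definition opt_Plam (m n d : nat) (r : R) (x : 'M[R]_(m, n))
    (G : 'rV[R]_d -> 'M[R]_(m, n)) (lam : R) (z : 'rV[R]_d) (M : 'M[R]_(m, n)) : Prop :=
  @box d r z /\
  forall z' M', @box d r z' ->
    fid x G z M + lam * l1norm M <= fid x G z' M' + lam * l1norm M'.

Definition opt_P0 (m n d : nat) (r : R) (x : 'M[R]_(m, n))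
    (G : 'rV[R]_d -> 'M[R]_(m, n)) (n0 : nat) (z : 'rV[R]_d) (M : 'M[R]_(m, n)) : Prop :=
  @box d r z /\ (l0norm M <= n0)%N /\
  forall z' M', @box d r z' -> (l0norm M' <= n0)%N -> fid x G z M <= fid x G z' M'.

Definition Zstar (m n d : nat) (r : R) (x : 'M[R]_(m, n))
    (G : 'rV[R]_d -> 'M[R]_(m, n)) (n0 : nat) : set 'rV[R]_d :=
  [set z | exists M, opt_P0 r x G n0 z M].

Definition Ztilde (m n d : nat) (r : R) (x : 'M[R]_(m, n))
    (G : 'rV[R]_d -> 'M[R]_(m, n)) : set 'rV[R]_d :=
  [set z | @box d r z /\ forall z', @box d r z' -> (l0norm (x - G z) <= l0norm (x - G z'))%N].

End Defs.

From HB Require Import structures.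
From mathcomp Require Import all_boot all_order all_algebra.
From mathcomp Require Import all_classical all_reals all_analysis.
From mathcomp Require Import ring lra.
Set Implicit Arguments. Unset Strict Implicit. Unset Printing Implicit Defensive.
Import Order.TTheory GRing.Theory Num.Theory.
Import numFieldNormedType.Exports.
Local Open Scope classical_set_scope.
Local Open Scope ring_scope.

(* Let zb be a cluster point of zhat(lam) as lam -> 0+ (one exists in the box
   by compactness) and let z' be in the box. Masking exactly the support of
   x - G z' gives (P_lam) the value lam ||x - G z'||_0. Near zb, every entry
   in the support of x - G zb has modulus at least some dl > 0, and whatever
   its mask value mu such an entry contributes
     ((1 - mu) e)^2 + lam |mu| >= lam - lam^2 / (4 dl^2)
   to (P_lam). Comparing both bounds at zhat(lam) for lam small enough gives
   ||x - G zb||_0 <= ||x - G z'||_0: every cluster point minimizes the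
   support size, so zhat(lam) is eventually close to Ztilde. Finally
   Ztilde is contained in Z*, since masking the support of x - G z makes
   the fidelity term vanish. *)

Lemma linfnormE (R : realType) d (v : 'rV[R]_d) : linfnorm v = `|v|.
Proof.
apply/le_anti/andP; split.
  rewrite /linfnorm; apply: bigmax_le => // i _.
  rewrite [leRHS]/Num.Def.normr /= mx_normrE.
  exact: (le_trans _ (le_bigmax _ _ (0, i))).
rewrite [leLHS]/Num.Def.normr /= mx_normrE; apply: bigmax_le.
  by rewrite /linfnorm; apply: bigmax_ge_id.
move=> [i j] _ /=; rewrite (ord1 i) /linfnorm.
exact: (le_bigmax _ _ j).
Qed.

Lemma mx_entry_norm_le (R : realType) m n (A : 'M[R]_(m, n)) i j : `|A i j| <= `|A|.
Proof. by rewrite [leRHS]/Num.Def.normr /= mx_normrE; exact: (le_bigmax _ _ (i, j)). Qed.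

Lemma dinf_ge0 (R : realType) d (a b : 'rV[R]_d) (B : set 'rV[R]_d) :
  B b -> 0 <= dinf a B.
Proof.
move=> Bb; apply: lb_le_inf; first by exists (linfnorm (a - b)), b.
by move=> _ [c _ <-]; rewrite linfnormE.
Qed.

Lemma dinf_le (R : realType) d (a b : 'rV[R]_d) (B : set 'rV[R]_d) :
  B b -> dinf a B <= `|a - b|.
Proof.
move=> Bb; rewrite -linfnormE; apply: ge_inf; last by exists b.
by exists 0 => _ [c _ <-]; rewrite linfnormE.
Qed.

Lemma box_compact (R : realType) d (r : R) : compact (@box R d r).
Proof.
have -> : @box R d r = [set v : 'rV[R]_d | forall i, `[- r, r]%classic (v ord0 i)].
  apply/funext => v; apply/propext; rewrite /box.
  have -> : (0 : 'I_1) = ord0 by apply/val_inj.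
  by split=> H i; have := H i; rewrite /= in_itv.
by apply: (@rV_compact _ _ (fun=> `[- r, r]%classic)) => i; exact: segment_compact.
Qed.

Lemma cluster_fmap_ex (T : Type) (U : topologicalType) (f : T -> U)
    (F : set_system T) {FF : Filter F} (u : U) (A : set T) (B : set U) :
  cluster (f @ F) u -> F A -> nbhs u B -> exists2 t, A t & B (f t).
Proof.
move=> clu FA uB.
have fFA : F (f @^-1` (f @` A)) by apply: filterS FA => t At; exists t.
by have [_ [[t At <-] Bft]] := clu _ _ fFA uB; exists t.
Qed.

Definition supp_mx (R : realType) m n (A : 'M[R]_(m, n)) : {set 'I_m * 'I_n} :=
  [set p | A p.1 p.2 != 0]%SET.

Definition mask_mx (R : realType) m n (A : 'M[R]_(m, n)) : 'M[R]_(m, n) :=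
  \matrix_(i, j) (A i j != 0)%:R.

Lemma l0normE (R : realType) m n (A : 'M[R]_(m, n)) : l0norm A = #|supp_mx A|.
Proof.
by apply: eq_card => -[i j]; rewrite finset.inE /in_set unfold_in /= asboolb.
Qed.

Lemma l0norm_mask (R : realType) m n (A : 'M[R]_(m, n)) : l0norm (mask_mx A) = l0norm A.
Proof.
rewrite !l0normE; apply: eq_card => -[i j]; rewrite !finset.inE mxE /=.
by case: (A i j != 0); rewrite ?oner_neq0 ?eqxx.
Qed.

Lemma near_entries_away (R : realType) m n (T : topologicalType)
    (f : T -> 'M[R]_(m, n)) (a : T) :
  {for a, continuous f} ->
  exists2 dl : R, 0 < dl &
    \forall t \near a, forall p, p \in supp_mx (f a) -> dl <= `|f t p.1 p.2|.
Proof.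
move=> fa; pose dl := \big[Num.min/1]_(p in supp_mx (f a)) `|f a p.1 p.2|.
have dl0 : 0 < dl by apply: lt_bigmin => // p; rewrite finset.inE normr_gt0.
have dl20 : 0 < dl / 2 by rewrite divr_gt0.
exists (dl / 2) => //; move/cvgrPdist_lt: fa => /(_ _ dl20).
apply: filterS => t near_t p Sp.
have dl_le : dl <= `|f a p.1 p.2| by apply: bigmin_le_cond.
have near_p : `|f a p.1 p.2 - f t p.1 p.2| < dl / 2.
  by have := mx_entry_norm_le (f a - f t) p.1 p.2; rewrite !mxE => /le_lt_trans->.
have := ler_distD (f t p.1 p.2) (f a p.1 p.2) 0; rewrite !subr0.
lra.
Qed.

Section Penalized_objective.
Variables (R : realType) (m n d : nat) (r : R) (x : 'M[R]_(m, n)).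
Variable G : 'rV[R]_d -> 'M[R]_(m, n).

Lemma fid_ge0 z M : 0 <= fid x G z M.
Proof. by apply: sumr_ge0 => i _; apply: sumr_ge0 => j _; apply: sqr_ge0. Qed.

Lemma penalizedE z M lam :
  fid x G z M + lam * l1norm M = \sum_(p : 'I_m * 'I_n)
    (((1 - M p.1 p.2) * (x p.1 p.2 - G z p.1 p.2)) ^+ 2 + lam * `|M p.1 p.2|).
Proof.
rewrite -(pair_big xpredT xpredT (fun i j =>
  ((1 - M i j) * (x i j - G z i j)) ^+ 2 + lam * `|M i j|)) /=.
rewrite /fid /l2norm_sq /l1norm mulr_sumr -big_split /=.
apply: eq_bigr => i _; rewrite mulr_sumr -big_split /=; apply: eq_bigr => j _.
by rewrite !mxE; congr (_ ^+ 2 + _); ring.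
Qed.

Lemma penalized_mask z lam :
  fid x G z (mask_mx (x - G z)) + lam * l1norm (mask_mx (x - G z)) =
  lam * (l0norm (x - G z))%:R.
Proof.
rewrite penalizedE l0normE mulr_natr -sumr_const [RHS]big_mkcond /=.
apply: eq_bigr => -[i j] _; rewrite finset.inE !mxE /=.
case: eqP => [->|_]; last by rewrite subrr normr1 !(mul0r, expr0n, mulr1, add0r).
by rewrite subr0 normr0 !(mulr0, expr0n, addr0).
Qed.

Lemma penalized_entry_ge (dl e mu lam : R) :
  0 <= dl -> dl <= `|e| -> 0 <= lam ->
  4 * dl ^+ 2 * lam - lam ^+ 2 <= 4 * dl ^+ 2 * (((1 - mu) * e) ^+ 2 + lam * `|mu|).
Proof.
move=> dl0 dle lam0.
have dl2 : dl ^+ 2 <= e ^+ 2 by rewrite -(real_normK (num_real e)) !expr2 ler_pM.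
have : (1 - mu) ^+ 2 * dl ^+ 2 + lam * mu <= ((1 - mu) * e) ^+ 2 + lam * `|mu|.
  by rewrite exprMn lerD ?ler_wpM2l ?sqr_ge0 ?real_ler_norm ?num_real.
move/(ler_wpM2l (mulr_ge0 (ler0n _ 4) (sqr_ge0 dl))); apply: le_trans.
have -> : 4 * dl ^+ 2 * ((1 - mu) ^+ 2 * dl ^+ 2 + lam * mu) =
  4 * dl ^+ 2 * lam - lam ^+ 2 + (2 * dl ^+ 2 * (1 - mu) - lam) ^+ 2 by ring.
by rewrite lerDl sqr_ge0.
Qed.

Lemma penalized_ge_card z M (lam dl : R) (S : {set 'I_m * 'I_n}) :
  0 <= dl -> 0 <= lam -> (forall p, p \in S -> dl <= `|x p.1 p.2 - G z p.1 p.2|) ->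
  #|S|%:R * (4 * dl ^+ 2 * lam - lam ^+ 2) <=
    4 * dl ^+ 2 * (fid x G z M + lam * l1norm M).
Proof.
move=> dl0 lam0 far; rewrite penalizedE mulr_sumr mulrC mulr_natr -sumr_const.
rewrite [leRHS](bigID (mem S)) /= -[leLHS]addr0 lerD //.
  by apply: ler_sum => p /far far_p; apply: penalized_entry_ge.
apply: sumr_ge0 => p _; rewrite mulr_ge0 ?mulr_ge0 ?sqr_ge0 //.
by rewrite addr_ge0 ?sqr_ge0 ?mulr_ge0.
Qed.

Lemma opt_Plam_card_le (lam : R) z M (dl : R) (S : {set 'I_m * 'I_n}) z' :
  opt_Plam r x G lam z M -> 0 < lam -> 0 < dl -> lam * #|S|%:R < 4 * dl ^+ 2 ->
  (forall p, p \in S -> dl <= `|x p.1 p.2 - G z p.1 p.2|) -> box r z' ->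
  (#|S| <= l0norm (x - G z'))%N.
Proof.
move=> [_ optM] lam0 dl0 small far bz'.
have ub := optM z' (mask_mx (x - G z')) bz'; rewrite penalized_mask in ub.
have lb := penalized_ge_card M (ltW dl0) (ltW lam0) far.
rewrite leqNgt; apply/negP => lt_k_s.
set k := (l0norm _)%:R in ub; set s := #|S|%:R in small lb.
have ks : k + 1 <= s by rewrite /k /s natr1 ler_nat.
have dl2 : 0 <= 4 * dl ^+ 2 by rewrite mulr_ge0 ?sqr_ge0.
have : lam * s * lam < 4 * dl ^+ 2 * lam by rewrite ltr_pM2r.
have := ler_wpM2l dl2 ub.
have := ler_wpM2l (mulr_ge0 dl2 (ltW lam0)) ks.
lra.
Qed.

Lemma Ztilde_sub_Zstar n0 zstar :
  box r zstar -> (l0norm (x - G zstar) <= n0)%N -> Ztilde r x G `<=` Zstar r x G n0.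
Proof.
move=> bzs hzs z [bz zmin]; exists (mask_mx (x - G z)); split=> //; split.
  by rewrite l0norm_mask (leq_trans (zmin _ bzs)).
move=> z' M' _ _; have := penalized_mask z 0; rewrite !mul0r addr0 => ->.
exact: fid_ge0.
Qed.

End Penalized_objective.

Section Penalized_limit.
Variables (R : realType) (m n d : nat) (r : R) (x : 'M[R]_(m, n)).
Variables (G : 'rV[R]_d -> 'M[R]_(m, n)) (zhat : R -> 'rV[R]_d).
Hypothesis cG : continuous G.
Hypothesis zhat_opt : forall lam, 0 < lam -> exists M, opt_Plam r x G lam (zhat lam) M.

Lemma cluster_Ztilde (F : set_system R) {FF : Filter F} zb :
  F --> (0 : R)^'+ -> cluster (zhat @ F) zb -> box r zb -> Ztilde r x G zb.
Proof.
move=> F0 clz bzb; split=> // z' bz'.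
have cxG : {for zb, continuous (fun z => x - G z)}.
  exact: cvgB (cvg_cst x) (@cG zb).
have [dl dl0 away] := near_entries_away cxG.
set S := supp_mx (x - G zb) in away.
have a0 : 0 < 4 * dl ^+ 2 / #|S|.+1%:R by rewrite divr_gt0 ?mulr_gt0 ?exprn_gt0.
have small_pos : \forall t \near (0 : R)^'+, 0 < t /\ t < 4 * dl ^+ 2 / #|S|.+1%:R.
  by apply/near_andP; split; [exact: nbhs_right_gt | exact: nbhs_right_lt].
have [lam [lam0 lam_small] far] := cluster_fmap_ex clz (F0 _ small_pos) away.
have [M optM] := zhat_opt lam0.
rewrite l0normE; apply: (opt_Plam_card_le optM lam0 dl0 _ _ bz').
  apply: (@le_lt_trans _ _ (lam * #|S|.+1%:R)); last by rewrite -ltr_pdivlMr ?ltr0n.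
  by apply: ler_wpM2l; [exact: ltW | rewrite ler_nat].
by move=> p /far; rewrite !mxE.
Qed.

Lemma near_Ztilde eps : 0 < eps ->
  \forall lam \near (0 : R)^'+, exists2 b, Ztilde r x G b & `|zhat lam - b| < eps.
Proof.
move=> eps0; set Q := fun lam => exists2 b, _ & _.
(* Otherwise 0+ restricted to the lam where the claim fails is a proper
   filter; a cluster point of zhat along it lies in Ztilde, yet zhat(lam)
   comes within eps of it for some such lam. *)
apply: contrapT => notQ; pose F := within (~` Q) (0 : R)^'+.
have PF : ProperFilter F.
  apply: Build_ProperFilter => F0.
  by apply: notQ; move: F0; rewrite /F /within /=; apply: filterS => lam /contrapT.
have Fbox : (zhat @ F) (box r).
  apply: cvg_within; apply: filterS (nbhs_right_gt 0) => lam /zhat_opt.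
  by case=> M [].
have [zb [bzb clz]] := box_compact (fmap_proper_filter zhat PF) Fbox.
have Zzb : Ztilde r x G zb by exact: cluster_Ztilde (cvg_within _) clz bzb.
have [lam notQlam close] :=
  cluster_fmap_ex clz (withinT _ _) (nbhs_ball_norm zb (PosNum eps0)).
by apply: notQlam; exists zb => //; apply: ball_norm_sym.
Qed.

Lemma dinf_cvg0 (B : set 'rV[R]_d) :
  Ztilde r x G `<=` B -> dinf (zhat lam) B @[lam --> 0^'+] --> 0.
Proof.
move=> ZB; apply/cvgrPdist_lt => e e0.
apply: filterS (near_Ztilde e0) => lam [b /ZB Bb].
by rewrite sub0r normrN ger0_norm ?(dinf_ge0 _ Bb) // => /(le_lt_trans (dinf_le _ Bb)).
Qed.

End Penalized_limit.

Theorem theorem1 (R : realType) (m n d n0 : nat) (r : R)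
    (x : 'M[R]_(m, n)) (G : 'rV[R]_d -> 'M[R]_(m, n)) (zstar : 'rV[R]_d)
    (zhat : R -> 'rV[R]_d) :
  (0 < m)%N -> (0 < n)%N -> (0 < d)%N -> (0 < n0)%N -> 0 < r ->
  continuous G ->
  @box R d r zstar -> (l0norm (x - G zstar) <= n0)%N ->
  (forall lam, 0 < lam -> exists M, opt_Plam r x G lam (zhat lam) M) ->
  [/\ dinf (zhat lam) (Zstar r x G n0) @[lam --> 0^'+] --> 0,
      dinf (zhat lam) (Ztilde r x G) @[lam --> 0^'+] --> 0
    & Ztilde r x G = [set zstar] -> zhat lam @[lam --> 0^'+] --> zstar].
Proof.
move=> _ _ _ _ _ cG bzs hzs zhat_opt; split.
- exact/(dinf_cvg0 cG zhat_opt)/(Ztilde_sub_Zstar bzs hzs).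
- exact: (dinf_cvg0 cG zhat_opt).
- move=> Zeq; apply/cvgrPdist_lt => e e0.
  apply: filterS (near_Ztilde cG zhat_opt e0) => lam [b].
  by rewrite Zeq => ->; rewrite distrC.
Qed.
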